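(* Fix device $n$, a slot $t$ in frame $k$ with freezing percentage $\gamma_n^k\in[0,1]$, control parameter $V\ge0$, queue value $Q_n^{kT}>0$ and observed channel gain $h_n^t>0$, and assume $\tau_n^{\mathrm{cmp},t}<\tau_0$. Consider the per-slot problem $\min_{0\le p_n^t\le\overline{P}_n}\ VX_n^t+Q_n^{kT}E_n^t$. An optimal transmit power is $$p_n^{t,*}=\begin{cases}p_{n,\min}^t,&\text{if }p_{n,\min}^t\le p_{n,\max}^k,\\0,&\text{otherwise,}\end{cases}$$ where $$p_{n,\min}^t=\frac{N_0}{h_n^t}\Big(2^{\frac{(1-\gamma_n^k)S}{W(\tau_0-\tau_n^{\mathrm{cmp},t})}}-1\Big),\qquad p_{n,\max}^k=\Big[\frac{(VB_n\lambda-e_n^{\mathrm{cmp}}Q_n^{kT})(1-\gamma_n^k)}{Q_n^{kT}(\tau_0-\tau_n^{\mathrm{cmp},k})}\Big]_0^{\overline{P}_n},$$ with $[x]_a^b=\min\{\max\{x,a\},b\}$, $e_n^{\mathrm{cmp}}=\frac{\alpha_nc_nB_nf_n^2}{2}$, and $\tau_n^{\mathrm{cmp},k}=\tau_n^{\mathrm{cmp},t}$ the (frame-constant) computation latency.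
   Context: Device $n$ with $B_n$ training samples, CPU frequency $f_n$, $c_n$ cycles per sample and effective capacitance $\alpha_n$ trains with a fraction $\gamma_n^k$ of its parameters frozen: computation latency $\tau_n^{\mathrm{cmp},t}=(1-\gamma_n^k)c_nB_n/f_n$ and computation energy $E_n^{\mathrm{cmp},t}=\frac{\alpha_n}{2}(1-\gamma_n^k)c_nB_nf_n^2$. With transmit power $p$, bandwidth $W$, noise power $N_0$, channel gain $h_n^t$, the rate is $r=W\log_2(1+ph_n^t/N_0)$, upload latency $\tau_n^{\mathrm{com},t}=(1-\gamma_n^k)S/r$ and communication energy $E_n^{\mathrm{com},t}=p(1-\gamma_n^k)S/r$, where $S$ is the full gradient size in bits. The upload succeeds ($\mathbb{1}_n^t=1$) iff $\tau_n^{\mathrm{cmp},t}+\tau_n^{\mathrm{com},t}\le\tau_0$ for a per-round latency $\tau_0$; $\overline{P}_n$ is the peak power. The penalty is $X_n^t=\lambda\mathbb{1}_n^tB_n(\gamma_n^k-1)$ with constant $\lambda>0$. For $p>0$ the energy is $E_n^t=E_n^{\mathrm{cmp},t}+E_n^{\mathrm{com},t}$; choosing $p=0$ means the device drops out of training in this slot, so $\mathbb{1}_n^t=0$, $X_n^t=0$ and $E_n^t=0$. *)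

From Stdlib Require Import Reals.
Open Scope R_scope.

(* Static system parameters of device n (frame/slot indices are fixed). *)
Record Params := mkParams {
  p_B : R;      (* number of training samples B_n *)
  p_f : R;      (* CPU frequency f_n *)
  p_c : R;      (* cycles per sample c_n *)
  p_alpha : R;  (* effective capacitance alpha_n *)
  p_W : R;      (* bandwidth *)
  p_N0 : R;     (* noise power *)
  p_S : R;      (* full gradient size in bits *)
  p_tau0 : R;   (* per-round latency *)
  p_Pbar : R;   (* peak power *)
  p_lam : R
}.

Definition log2 (x : R) : R := ln x / ln 2.

Definition rate (P : Params) (p h : R) : R := p_W P * log2 (1 + p * h / p_N0 P).

Definition tau_cmp (P : Params) (g : R) : R := (1 - g) * p_c P * p_B P / p_f P.
Definition E_cmp (P : Params) (g : R) : R :=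
  p_alpha P / 2 * (1 - g) * p_c P * p_B P * (p_f P) ^ 2.

Definition tau_com (P : Params) (g p h : R) : R := (1 - g) * p_S P / rate P p h.
Definition E_com (P : Params) (g p h : R) : R := p * (1 - g) * p_S P / rate P p h.

Definition indic (P : Params) (g p h : R) : R :=
  if Rle_dec (tau_cmp P g + tau_com P g p h) (p_tau0 P) then 1 else 0.

(* penalty X and energy E; p = 0 means dropping out: indicator 0, X = 0, E = 0 *)
Definition Xpen (P : Params) (g p h : R) : R :=
  if Req_EM_T p 0 then 0 else p_lam P * indic P g p h * p_B P * (g - 1).
Definition Energy (P : Params) (g p h : R) : R :=
  if Req_EM_T p 0 then 0 else E_cmp P g + E_com P g p h.

Definition obj (P : Params) (V Q g h p : R) : R :=
  V * Xpen P g p h + Q * Energy P g p h.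

Definition clip (x a b : R) : R := Rmin (Rmax x a) b.

Definition e_cmp (P : Params) : R := p_alpha P * p_c P * p_B P * (p_f P) ^ 2 / 2.

Definition p_min (P : Params) (g h : R) : R :=
  p_N0 P / h * (Rpower 2 ((1 - g) * p_S P / (p_W P * (p_tau0 P - tau_cmp P g))) - 1).

Definition p_max (P : Params) (V Q g : R) : R :=
  clip ((V * p_B P * p_lam P - e_cmp P * Q) * (1 - g) / (Q * (p_tau0 P - tau_cmp P g)))
       0 (p_Pbar P).

Definition p_opt (P : Params) (V Q g h : R) : R :=
  if Rle_dec (p_min P g h) (p_max P V Q g) then p_min P g h else 0.

From Stdlib Require Import Reals Lra Psatz.
Open Scope R_scope.

(* Once the device transmits with p > 0, the upload succeeds exactly when the
   rate reaches (1 - g) S / (tau0 - tau_cmp), i.e. exactly when p >= p_min, so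
   the penalty is a step at p_min.  The energy is increasing in p, because
   p / log(1 + k p) is nondecreasing (concavity of the logarithm).  Hence on
   (0, p_min) the objective is nonnegative (no reward, only energy) and on
   [p_min, Pbar] it is minimised at p_min, where it equals
   Q (tau0 - tau_cmp) (p_min - x) with x the unclipped expression inside p_max.
   The best choice is therefore p_min when p_min <= x and p_min <= Pbar, and
   dropping out (p = 0, objective 0) otherwise. *)

Lemma ln_gt_0 x : 1 < x -> 0 < ln x.
Proof. intro Hx; rewrite <- ln_1; apply ln_increasing; lra. Qed.

Lemma div_le_swap x y z : 0 < y -> 0 < z -> x / y <= z -> x / z <= y.
Proof.
  intros Hy Hz H.
  assert (x / y * y = x) by (field; lra).
  assert (x / z * z = x) by (field; lra).
  nra.
Qed.

Lemma div_le_swap_iff x y z : 0 < y -> 0 < z -> x / y <= z <-> x / z <= y.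
Proof. intros Hy Hz; split; apply div_le_swap; assumption. Qed.

Lemma exp_sub1_ratio_le u v : 0 < u -> u <= v -> v * (exp u - 1) <= u * (exp v - 1).
Proof.
  intros Hu Huv.
  assert (Htangent_u : exp u * (1 + (v - u)) <= exp v).
  { replace (exp v) with (exp u * exp (v - u)) by (rewrite <- exp_plus; f_equal; ring).
    apply Rmult_le_compat_l; [apply Rlt_le, exp_pos | apply exp_ineq1_le]. }
  assert (Htangent_0 : exp u - 1 <= u * exp u).
  { assert (Hinv : exp u * exp (- u) = 1)
      by (rewrite <- exp_plus, <- exp_0; f_equal; ring).
    pose proof (exp_ineq1_le (- u)); pose proof (exp_pos u); nra. }
  nra.
Qed.

Lemma ln_1p_ratio_le k p1 p2 : 0 < k -> 0 < p1 -> p1 <= p2 ->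
  p1 * ln (1 + p2 * k) <= p2 * ln (1 + p1 * k).
Proof.
  intros Hk Hp1 Hp12.
  assert (Hu : 0 < ln (1 + p1 * k)) by (apply ln_gt_0; nra).
  assert (Huv : ln (1 + p1 * k) <= ln (1 + p2 * k)).
  { destruct (Req_dec p1 p2) as [<-|Hne]; [lra|].
    apply Rlt_le, ln_increasing; nra. }
  pose proof (exp_sub1_ratio_le _ _ Hu Huv) as Hexp.
  rewrite !exp_ln in Hexp by nra.
  nra.
Qed.

Lemma le_clip0_iff y x b : 0 < y -> y <= clip x 0 b <-> y <= x /\ y <= b.
Proof. intro Hy; unfold clip, Rmin, Rmax; repeat destruct Rle_dec; lra. Qed.

Section Rate.

Variables (P : Params) (h : R).
Hypotheses (HW : 0 < p_W P) (HN0 : 0 < p_N0 P) (Hh : 0 < h).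

Lemma rate_0 : rate P 0 h = 0.
Proof. unfold rate, log2; rewrite Rmult_0_l, Rdiv_0_l, Rplus_0_r, ln_1, Rdiv_0_l; ring. Qed.

Lemma rate_lt p1 p2 : 0 <= p1 -> p1 < p2 -> rate P p1 h < rate P p2 h.
Proof.
  intros Hp1 Hp12; unfold rate, log2.
  pose proof (ln_gt_0 2 ltac:(lra)).
  apply Rmult_lt_compat_l; [lra|].
  apply Rmult_lt_compat_r; [apply Rinv_0_lt_compat; lra|].
  assert (p1 * h / p_N0 P < p2 * h / p_N0 P).
  { apply Rmult_lt_compat_r; [apply Rinv_0_lt_compat; lra | nra]. }
  assert (0 <= p1 * h / p_N0 P) by (apply Rmult_le_pos; [nra | left; apply Rinv_0_lt_compat; lra]).
  apply ln_increasing; lra.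
Qed.

Lemma rate_pos p : 0 < p -> 0 < rate P p h.
Proof. intro Hp; rewrite <- rate_0; apply rate_lt; lra. Qed.

Lemma rate_le_iff p1 p2 : 0 <= p1 -> 0 <= p2 -> rate P p1 h <= rate P p2 h <-> p1 <= p2.
Proof.
  intros Hp1 Hp2; split; intro H.
  - destruct (Rlt_le_dec p2 p1) as [Hlt|]; [|assumption].
    pose proof (rate_lt _ _ Hp2 Hlt); lra.
  - destruct H as [Hlt|<-]; [left; apply rate_lt|]; lra.
Qed.

Lemma div_rate_le p1 p2 : 0 < p1 -> p1 <= p2 -> p1 / rate P p1 h <= p2 / rate P p2 h.
Proof.
  intros Hp1 Hp12.
  set (k := h / p_N0 P).
  assert (Hk : 0 < k) by (apply Rdiv_lt_0_compat; lra).
  pose proof (ln_gt_0 2 ltac:(lra)) as Hln2.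
  assert (Hrate : forall p, rate P p h = p_W P / ln 2 * ln (1 + p * k)).
  { intro p; unfold rate, log2, k.
    replace (p * h / p_N0 P) with (p * (h / p_N0 P)) by (unfold Rdiv; ring).
    field; lra. }
  rewrite !Hrate.
  assert (HL1 : 0 < ln (1 + p1 * k)) by (apply ln_gt_0; nra).
  assert (HL2 : 0 < ln (1 + p2 * k)) by (apply ln_gt_0; nra).
  pose proof (ln_1p_ratio_le k p1 p2 Hk Hp1 Hp12) as Hcross.
  replace (p1 / (p_W P / ln 2 * ln (1 + p1 * k)))
    with (ln 2 / p_W P * (p1 * ln (1 + p2 * k)) / (ln (1 + p1 * k) * ln (1 + p2 * k)))
    by (field; lra).
  replace (p2 / (p_W P / ln 2 * ln (1 + p2 * k)))
    with (ln 2 / p_W P * (p2 * ln (1 + p1 * k)) / (ln (1 + p1 * k) * ln (1 + p2 * k)))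
    by (field; lra).
  apply Rmult_le_compat_r; [left; apply Rinv_0_lt_compat; nra|].
  apply Rmult_le_compat_l; [left; apply Rdiv_lt_0_compat|]; lra.
Qed.

Variable g : R.
Hypothesis Htau : tau_cmp P g < p_tau0 P.

Lemma rate_p_min :
  rate P (p_min P g h) h = (1 - g) * p_S P / (p_tau0 P - tau_cmp P g).
Proof.
  unfold rate, log2, p_min.
  replace (1 + p_N0 P / h * (Rpower 2 ((1 - g) * p_S P / (p_W P * (p_tau0 P - tau_cmp P g))) - 1)
           * h / p_N0 P)
    with (Rpower 2 ((1 - g) * p_S P / (p_W P * (p_tau0 P - tau_cmp P g))))
    by (field; lra).
  rewrite ln_Rpower.
  pose proof (ln_gt_0 2 ltac:(lra)).
  field; lra.
Qed.

Hypotheses (HS : 0 < p_S P) (Hg : g < 1).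

Lemma p_min_pos : 0 < p_min P g h.
Proof.
  unfold p_min.
  assert (Hexponent : 0 < (1 - g) * p_S P / (p_W P * (p_tau0 P - tau_cmp P g)))
    by (apply Rdiv_lt_0_compat; nra).
  pose proof (Rpower_lt 2 _ _ ltac:(lra) Hexponent) as H2.
  rewrite Rpower_O in H2 by lra.
  apply Rmult_lt_0_compat; [apply Rdiv_lt_0_compat|]; lra.
Qed.

Lemma upload_in_time_iff p : 0 < p ->
  tau_cmp P g + tau_com P g p h <= p_tau0 P <-> p_min P g h <= p.
Proof.
  intro Hp.
  pose proof p_min_pos.
  rewrite <- (rate_le_iff (p_min P g h) p) by lra.
  rewrite rate_p_min.
  unfold tau_com.
  rewrite <- div_le_swap_iff by (try apply rate_pos; lra).
  lra.
Qed.

Lemma indic_in_time p : p_min P g h <= p -> indic P g p h = 1.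
Proof.
  intro Hp; pose proof p_min_pos.
  unfold indic; destruct Rle_dec as [|Hout]; [reflexivity|].
  exfalso; apply Hout, upload_in_time_iff; lra.
Qed.

Lemma indic_late p : 0 < p -> p < p_min P g h -> indic P g p h = 0.
Proof.
  intros Hp0 Hp.
  unfold indic; destruct Rle_dec as [Hin|]; [|reflexivity].
  apply upload_in_time_iff in Hin; lra.
Qed.

End Rate.

Lemma p_min_fully_frozen P h : p_min P 1 h = 0.
Proof.
  unfold p_min; rewrite Rminus_diag, !Rmult_0_l, Rdiv_0_l, Rpower_O by lra; ring.
Qed.

Definition p_max_unclipped (P : Params) (V Q g : R) : R :=
  (V * p_B P * p_lam P - e_cmp P * Q) * (1 - g) / (Q * (p_tau0 P - tau_cmp P g)).

Lemma p_max_clip P V Q g : p_max P V Q g = clip (p_max_unclipped P V Q g) 0 (p_Pbar P).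
Proof. reflexivity. Qed.

Lemma e_cmp_pos P : 0 < p_alpha P -> 0 < p_c P -> 0 < p_B P -> 0 < p_f P -> 0 < e_cmp P.
Proof.
  intros; unfold e_cmp.
  assert (0 < p_f P ^ 2) by (apply pow_lt; lra).
  apply Rdiv_lt_0_compat; [repeat apply Rmult_lt_0_compat|]; lra.
Qed.

Section Objective.

Variables (P : Params) (V Q g h : R).

Lemma obj_0 : obj P V Q g h 0 = 0.
Proof. unfold obj, Xpen, Energy; destruct Req_EM_T; [ring | congruence]. Qed.

Lemma obj_transmit p : p <> 0 ->
  obj P V Q g h p = (1 - g) * (Q * e_cmp P + Q * p_S P * (p / rate P p h)
                               - V * p_lam P * p_B P * indic P g p h).
Proof.
  intro Hp; unfold obj, Xpen, Energy, E_cmp, E_com, e_cmp.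
  destruct Req_EM_T; [contradiction|].
  unfold Rdiv; ring.
Qed.

Lemma obj_fully_frozen p : obj P V Q 1 h p = 0.
Proof.
  unfold obj, Xpen, Energy, E_cmp, E_com; destruct Req_EM_T; [ring|].
  unfold Rdiv; ring.
Qed.

Hypotheses (HW : 0 < p_W P) (HN0 : 0 < p_N0 P) (Hh : 0 < h) (HS : 0 < p_S P)
  (Hg : g < 1) (Htau : tau_cmp P g < p_tau0 P).

Lemma obj_nonneg_below_p_min p : 0 <= Q -> 0 <= e_cmp P ->
  0 <= p < p_min P g h -> 0 <= obj P V Q g h p.
Proof.
  intros HQ He [Hp0 Hp].
  destruct (Req_dec p 0) as [->|Hne]; [rewrite obj_0; lra|].
  rewrite obj_transmit, indic_late by lra.
  assert (0 <= p / rate P p h) by (left; apply Rdiv_lt_0_compat; [|apply rate_pos]; lra).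
  assert (0 <= Q * p_S P * (p / rate P p h)) by (apply Rmult_le_pos; nra).
  assert (0 <= Q * e_cmp P) by nra.
  nra.
Qed.

Lemma obj_ge_p_min p : 0 <= Q -> p_min P g h <= p ->
  obj P V Q g h (p_min P g h) <= obj P V Q g h p.
Proof.
  intros HQ Hp.
  pose proof (p_min_pos P h HW HN0 Hh g Htau HS Hg) as Hpm.
  rewrite !obj_transmit, !indic_in_time by lra.
  pose proof (div_rate_le P h HW HN0 Hh _ _ Hpm Hp).
  assert (0 <= Q * p_S P) by nra.
  apply Rmult_le_compat_l; [lra|].
  apply Rplus_le_compat_r, Rplus_le_compat_l, Rmult_le_compat_l; assumption.
Qed.

Lemma obj_p_min : 0 < Q ->
  obj P V Q g h (p_min P g h) =
  Q * (p_tau0 P - tau_cmp P g) * (p_min P g h - p_max_unclipped P V Q g).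
Proof.
  intro HQ.
  pose proof (p_min_pos P h HW HN0 Hh g Htau HS Hg).
  rewrite obj_transmit, indic_in_time, rate_p_min by lra.
  unfold p_max_unclipped; field; lra.
Qed.

End Objective.

Theorem proposition1 (prm : Params) (V Q g h : R) :
  0 < p_B prm -> 0 < p_f prm -> 0 < p_c prm -> 0 < p_alpha prm -> 0 < p_W prm -> 0 < p_N0 prm ->
  0 < p_S prm -> 0 < p_Pbar prm -> 0 < p_lam prm ->
  0 <= g <= 1 -> 0 <= V -> 0 < Q -> 0 < h ->
  tau_cmp prm g < p_tau0 prm ->
  (0 <= p_opt prm V Q g h <= p_Pbar prm) /\
  (forall p, 0 <= p <= p_Pbar prm -> obj prm V Q g h (p_opt prm V Q g h) <= obj prm V Q g h p).
Proof.
  intros HB Hf Hc Ha HW HN0 HS HP Hl Hg HV HQ Hh Htau.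
  destruct (Req_dec g 1) as [->|Hg1].
  { assert (Hdrop : p_opt prm V Q 1 h = 0)
      by (unfold p_opt; rewrite p_min_fully_frozen; destruct Rle_dec; reflexivity).
    rewrite Hdrop; split; [lra|].
    intros p _; rewrite !obj_fully_frozen; lra. }
  assert (Hpm : 0 < p_min prm g h) by (apply p_min_pos; lra).
  pose proof (e_cmp_pos prm Ha Hc HB Hf) as He.
  assert (HD : 0 < Q * (p_tau0 prm - tau_cmp prm g)) by nra.
  unfold p_opt; rewrite p_max_clip.
  destruct Rle_dec as [Hle|Hgt]; [rewrite le_clip0_iff in Hle by lra|];
    split; try lra; intros p Hp.
  - destruct (Rlt_le_dec p (p_min prm g h)).
    + apply Rle_trans with 0; [rewrite obj_p_min by lra; nra|].
      apply obj_nonneg_below_p_min; try split; lra.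
    + apply obj_ge_p_min; lra.
  - rewrite le_clip0_iff in Hgt by lra; rewrite obj_0.
    destruct (Rlt_le_dec p (p_min prm g h)).
    + apply obj_nonneg_below_p_min; try split; lra.
    + assert (Hunprofitable : p_max_unclipped prm V Q g < p_min prm g h).
      { destruct (Rlt_le_dec (p_max_unclipped prm V Q g) (p_min prm g h)); [assumption|].
        exfalso; apply Hgt; split; lra. }
      apply Rle_trans with (obj prm V Q g h (p_min prm g h)); [rewrite obj_p_min by lra; nra|].
      apply obj_ge_p_min; lra.
Qed.
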